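(* Let $h:[0,\infty)^3\to[0,\infty)$ be upper semicontinuous and nondecreasing in each variable, and set $g(t)=h(t,t,t)$ for $t\ge0$. Then $g(t)<t$ for every $t>0$ if and only if $\lim_{n\to\infty}g^n(t)=0$ for every $t>0$ (where $g^n$ denotes the $n$-th iterate of $g$). *)

From Stdlib Require Import Reals.
Open Scope R_scope.

(* The closed orthant [0,oo)^3, functions represented curried R -> R -> R -> R;
   only their values on the orthant matter. *)
Definition in_orthant3 (x y z : R) : Prop := 0 <= x /\ 0 <= y /\ 0 <= z.

Definition usc_orthant3 (h : R -> R -> R -> R) : Prop :=
  forall x y z, in_orthant3 x y z ->
  forall eps, 0 < eps -> exists delta, 0 < delta /\
    forall x' y' z', in_orthant3 x' y' z' ->
      Rabs (x' - x) < delta -> Rabs (y' - y) < delta -> Rabs (z' - z) < delta ->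
      h x' y' z' < h x y z + eps.

Definition nondecr_each3 (h : R -> R -> R -> R) : Prop :=
  forall x y z x' y' z', in_orthant3 x y z -> in_orthant3 x' y' z' ->
    x <= x' -> y <= y' -> z <= z' -> h x y z <= h x' y' z'.

Definition nonneg_on_orthant3 (h : R -> R -> R -> R) : Prop :=
  forall x y z, in_orthant3 x y z -> 0 <= h x y z.

(* If g t < t for t > 0, then also g 0 <= 0 by monotonicity,
   so every orbit decreases to some l >= 0; upper semicontinuity gives
   l <= g l, which forces l = 0.  Conversely, if g t >= t for some t > 0,
   monotonicity keeps the whole orbit of t above t. *)

From Stdlib Require Import Reals Lra.
Open Scope R_scope.

Definition usc_on_nonneg (g : R -> R) : Prop :=
  forall x, 0 <= x -> forall eps, 0 < eps -> exists delta, 0 < delta /\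
    forall y, 0 <= y -> Rabs (y - x) < delta -> g y < g x + eps.

Definition orbit (g : R -> R) (t : R) (n : nat) : R := Nat.iter n g t.

Lemma Un_cv_lb (u : nat -> R) (a l : R) :
  (forall n, a <= u n) -> Un_cv u l -> a <= l.
Proof.
  intros Hlb Hcv. destruct (Rle_dec a l) as [|Hgt]; [assumption|].
  destruct (Hcv (a - l)) as [N HN]; [lra|].
  specialize (HN N (le_n N)). specialize (Hlb N). unfold Rdist in HN.
  rewrite Rabs_right in HN; lra.
Qed.

Section Orbits.

Variable g : R -> R.
Hypothesis g_nonneg : forall x, 0 <= x -> 0 <= g x.
Hypothesis g_nondecr : forall x y, 0 <= x -> x <= y -> g x <= g y.

Lemma orbit_nonneg (t : R) (n : nat) : 0 <= t -> 0 <= orbit g t n.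
Proof. intros Ht. induction n as [|n IH]; simpl; auto. Qed.

Lemma orbit_ge_start (t : R) (n : nat) : 0 <= t -> t <= g t -> t <= orbit g t n.
Proof.
  intros Ht Hgt. induction n as [|n IH]; simpl; [lra|].
  pose proof (g_nondecr t _ Ht IH). lra.
Qed.

Lemma le_id_of_lt_id :
  (forall t, 0 < t -> g t < t) -> forall x, 0 <= x -> g x <= x.
Proof.
  intros Hlt x Hx. destruct (Rle_lt_or_eq_dec 0 x Hx) as [Hpos|<-].
  - left. exact (Hlt x Hpos).
  - destruct (Rle_dec (g 0) 0) as [|Hg0]; [assumption|].
    assert (Hhalf : 0 < g 0 / 2) by lra.
    pose proof (Hlt _ Hhalf). pose proof (g_nondecr 0 _ (Rle_refl 0) (Rlt_le _ _ Hhalf)).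
    lra.
Qed.

Lemma orbit_cv_of_le_id (t : R) :
  (forall x, 0 <= x -> g x <= x) -> 0 <= t -> { l : R | Un_cv (orbit g t) l }.
Proof.
  intros Hle Ht. apply decreasing_cv.
  - intro n. exact (Hle _ (orbit_nonneg t n Ht)).
  - exists 0. intros x [n ->]. unfold opp_seq. pose proof (orbit_nonneg t n Ht). lra.
Qed.

(* Upper semicontinuity at l bounds the terms g (orbit n) from above by
   about g l, and these terms are the orbit itself, shifted by one. *)
Lemma orbit_limit_le_image (t l : R) :
  usc_on_nonneg g -> 0 <= t -> 0 <= l -> Un_cv (orbit g t) l -> l <= g l.
Proof.
  intros Husc Ht Hl Hcv. destruct (Rle_dec l (g l)) as [|Hgt]; [assumption|].
  set (eps := (l - g l) / 2).
  destruct (Husc l Hl eps) as [d [Hd Hnear]]; [unfold eps; lra|].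
  destruct (Hcv (Rmin d eps)) as [N HN]; [apply Rmin_pos; unfold eps; lra|].
  pose proof (HN N (le_n N)) as HN0. pose proof (HN (S N) (le_S _ _ (le_n N))) as HN1.
  unfold Rdist in HN0, HN1.
  pose proof (Rmin_l d eps). pose proof (Rmin_r d eps).
  assert (Hstep : orbit g t (S N) < g l + eps).
  { change (g (orbit g t N) < g l + eps).
    apply Hnear; [apply orbit_nonneg; exact Ht | lra]. }
  pose proof (Rabs_def2 _ _ HN1). unfold eps in *. lra.
Qed.

Lemma lt_id_iff_orbit_cv0 :
  usc_on_nonneg g ->
  (forall t, 0 < t -> g t < t) <-> (forall t, 0 < t -> Un_cv (orbit g t) 0).
Proof.
  intros Husc. split.
  - intros Hlt t Ht.
    destruct (orbit_cv_of_le_id t (le_id_of_lt_id Hlt) (Rlt_le _ _ Ht)) as [l Hcv].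
    assert (Hl : 0 <= l).
    { apply (Un_cv_lb (orbit g t)); [|exact Hcv].
      intro n. apply orbit_nonneg; lra. }
    pose proof (orbit_limit_le_image t l Husc (Rlt_le _ _ Ht) Hl Hcv).
    destruct (Rle_lt_or_eq_dec 0 l Hl) as [Hpos|<-]; [|exact Hcv].
    pose proof (Hlt l Hpos). lra.
  - intros Hcv t Ht. destruct (Rlt_dec (g t) t) as [|Hge]; [assumption|].
    assert (Ht0 : t <= 0).
    { apply (Un_cv_lb (orbit g t)); [|exact (Hcv t Ht)].
      intro n. apply orbit_ge_start; lra. }
    lra.
Qed.

End Orbits.

Lemma diag_nonneg (h : R -> R -> R -> R) :
  nonneg_on_orthant3 h -> forall x, 0 <= x -> 0 <= h x x x.
Proof. intros Hnn x Hx. apply Hnn. repeat split; lra. Qed.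

Lemma diag_nondecr (h : R -> R -> R -> R) :
  nondecr_each3 h -> forall x y, 0 <= x -> x <= y -> h x x x <= h y y y.
Proof. intros Hmon x y Hx Hxy. apply Hmon; repeat split; lra. Qed.

Lemma diag_usc (h : R -> R -> R -> R) :
  usc_orthant3 h -> usc_on_nonneg (fun t => h t t t).
Proof.
  intros Husc x Hx eps Heps.
  destruct (Husc x x x ltac:(repeat split; lra) eps Heps) as [d [Hd Hnear]].
  exists d. split; [exact Hd|].
  intros y Hy Hyx. apply Hnear; [repeat split; lra | exact Hyx ..].
Qed.

Theorem lemma1 (h : R -> R -> R -> R) :
  nonneg_on_orthant3 h -> usc_orthant3 h -> nondecr_each3 h ->
  let g := fun t : R => h t t t in
  (forall t, 0 < t -> g t < t) <->
  (forall t, 0 < t -> Un_cv (fun n : nat => Nat.iter n g t) 0).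
Proof.
  intros Hnn Husc Hmon g.
  exact (lt_id_iff_orbit_cv0 g (diag_nonneg h Hnn) (diag_nondecr h Hmon)
           (diag_usc h Husc)).
Qed.
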